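(* Let $D$ be a strong nonseparable digraph, let $H$ be a strong nonseparable subdigraph of $D$, and let $P=(x_0,x_1,\ldots,x_{r-1},x_r)$ be an ear of $H$ in $D$ with length $l(P)=r\geq 2$. Suppose $H'=H\cup P$ has a kernel $N'$ and one of the following holds: (1) $x_0,x_r\in N'$; (2) $x_0\in N'$ and $x_r\notin N'$; (3) $x_0\notin N'$, $x_r\in N'$ and $l(P)$ is even; (4) $x_0,x_r\notin N'$ and $l(P)$ is odd. Then $H$ has a kernel.
   Context: All digraphs are finite, without loops or multiple arcs. Paths and cycles are directed; the length of a path is its number of arcs. A digraph is strong if for every ordered pair of vertices $x,y$ there is a directed path from $x$ to $y$; it is nonseparable if its underlying undirected graph is nonseparable (has no cut vertex). For a subdigraph $H$ of $D$, an ear of $H$ in $D$ is a directed path $(x_0,\ldots,x_r)$ in $D$ whose end vertices $x_0,x_r$ lie in $H$ and whose internal vertices $x_1,\ldots,x_{r-1}$ do not lie in $H$ (or a directed cycle with exactly one vertex $x_0=x_r$ in $H$). A kernel of a digraph is a set $N$ of vertices that is independent (no arc between two of its vertices) and absorbent (every vertex not in $N$ has an out-neighbour in $N$). *)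

From mathcomp Require Import all_boot.
Set Implicit Arguments. Unset Strict Implicit. Unset Printing Implicit Defensive.

(* A digraph is given by a vertex set W : {set V} and an arc set A : {set V * V}
   over an ambient finite type V. *)
Section Digraphs.
Variable V : finType.

(* well-formed digraph: arcs join vertices of W, no loops
   (multiple arcs are impossible since A is a set of pairs) *)
Definition wf_digraph (W : {set V}) (A : {set (V * V)}) : Prop :=
  forall a, a \in A -> [/\ a.1 \in W, a.2 \in W & a.1 != a.2].

Definition subdigraph (W2 : {set V}) (A2 : {set (V * V)})
  (W1 : {set V}) (A1 : {set (V * V)}) : Prop :=
  wf_digraph W2 A2 /\ W2 \subset W1 /\ A2 \subset A1.

(* directed walk x -> ... -> y using arcs of A (exists a directed path iff exists a walk) *)
Definition dpath_exists (A : {set (V * V)}) (x y : V) : Prop :=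
  exists s : seq V, path (fun u v => (u, v) \in A) x s && (last x s == y).

Definition strong (W : {set V}) (A : {set (V * V)}) : Prop :=
  forall x y, x \in W -> y \in W -> dpath_exists A x y.

Definition und_connected (W : {set V}) (A : {set (V * V)}) : Prop :=
  forall x y, x \in W -> y \in W ->
    exists s : seq V,
      path (fun u v => [&& u \in W, v \in W & ((u, v) \in A) || ((v, u) \in A)]) x s
      && (last x s == y).

Definition nonseparable (W : {set V}) (A : {set (V * V)}) : Prop :=
  und_connected W A /\ forall v, v \in W -> und_connected (W :\ v) A.

Definition is_kernel (W : {set V}) (A : {set (V * V)}) (N : {set V}) : Prop :=
  [/\ N \subset W,
      (forall u v, u \in N -> v \in N -> (u, v) \notin A) &
      (forall u, u \in W -> u \notin N -> exists2 v, v \in N & (u, v) \in A)].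

Definition has_kernel (W : {set V}) (A : {set (V * V)}) : Prop :=
  exists N, is_kernel W A N.

Definition seq_arcs (p : seq V) : seq (V * V) := zip p (behead p).

(* the sequence x0 :: q = [x_0; ...; x_r] is an ear of (WH, AH) in the digraph
   with arc set AD: a directed path (all x_i distinct) or a directed cycle
   (x_0 = x_r and x_1..x_r distinct) with x_0, x_r in WH, internal vertices
   x_1..x_{r-1} not in WH, and all arcs (x_i, x_{i+1}) in AD. *)
Definition is_ear (AD : {set (V * V)}) (WH : {set V}) (x0 : V) (q : seq V) : Prop :=
  [/\ x0 \in WH, last x0 q \in WH,
      (forall i, 0 < i < size q -> nth x0 (x0 :: q) i \notin WH),
      (forall a, a \in seq_arcs (x0 :: q) -> a \in AD) &
      (uniq (x0 :: q) \/ (last x0 q = x0 /\ uniq q))].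

End Digraphs.

From mathcomp Require Import all_boot.
From mathcomp Require Import zify.
Set Implicit Arguments. Unset Strict Implicit. Unset Printing Implicit Defensive.

(* N' :&: WH is a kernel of H.  It is independent, and a vertex of H outside
   N' is absorbed through an arc of H unless its only absorbing arc is the
   first arc (x_0, x_1) of the ear, with x_0 outside and x_1 inside N'.  Each
   internal vertex x_i has x_{i+1} as its unique out-neighbour in H', so
   membership in N' alternates along x_1, ..., x_r: x_1 \in N' iff
   (x_r \in N' xor r - 1 is odd).  Each of the four hypotheses excludes
   x_0 \notin N', x_1 \in N'. *)

Lemma alternating_odd (b : nat -> bool) m n :
  m <= n -> (forall i, m <= i < n -> b i = ~~ b i.+1) ->
  b m = b n (+) odd (n - m).
Proof.
elim: n => [|n IHn]; first by rewrite leqn0 => /eqP ->; rewrite addbF.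
rewrite leq_eqVlt => /predU1P[-> _|lt_mn alt]; first by rewrite subnn addbF.
rewrite ltnS in lt_mn.
rewrite IHn // => [|i /andP[le_mi lt_in]]; last by apply: alt; rewrite le_mi ltnW.
by rewrite alt ?lt_mn ?ltnSn // subSn //= addNb addbN.
Qed.

Section Kernels.
Variable V : finType.
Implicit Types (W : {set V}) (A : {set (V * V)}) (N : {set V}).

Lemma is_kernel_succ1 W A N u v :
  is_kernel W A N -> u \in W -> (u, v) \in A ->
  (forall w, (u, w) \in A -> w = v) -> (u \in N) = (v \notin N).
Proof.
move=> [_ indN absN] uW uv succ1.
case uN: (u \in N); case vN: (v \in N) => //.
- by move: (indN _ _ uN vN); rewrite uv.
- by have [w wN /succ1 wv] := absN _ uW (negbT uN); rewrite -wv wN in vN.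
Qed.

Lemma is_kernel_restrict W W' A A' N :
  wf_digraph W A -> W \subset W' -> A \subset A' -> is_kernel W' A' N ->
  (forall u v, u \in W -> u \notin N -> v \in N -> (u, v) \in A' -> (u, v) \in A) ->
  is_kernel W A (N :&: W).
Proof.
move=> wfA sWW' sAA' [_ indN absN] arc_in_A; split; first exact: subsetIr.
  move=> u v /setIP[uN _] /setIP[vN _].
  by apply: contra (indN _ _ uN vN); apply: (subsetP sAA').
move=> u uW; rewrite inE uW andbT => uN.
have [v vN /(arc_in_A _ _ uW uN vN) uv] := absN _ (subsetP sWW' _ uW) uN.
by exists v => //; rewrite inE vN; have [] := wfA _ uv.
Qed.

End Kernels.

Section Ear.
Variables (V : finType) (AD : {set (V * V)}) (WH : {set V}) (x0 : V) (q : seq V).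
Hypothesis ear : is_ear AD WH x0 q.

Local Notation x := (nth x0 (x0 :: q)).

Lemma seq_arcsP a :
  reflect (exists2 j, j < size q & a = (x j, x j.+1)) (a \in seq_arcs (x0 :: q)).
Proof.
have size_arcs : size (seq_arcs (x0 :: q)) = size q.
  by rewrite size_zip /=; apply/minn_idPr.
have nth_arcs j : j < size q -> nth (x0, x0) (seq_arcs (x0 :: q)) j = (x j, x j.+1).
  by rewrite nth_zip_cond size_arcs => ->.
apply: (iffP (nthP (x0, x0))); rewrite size_arcs => -[j lt_j def_a];
  by exists j; rewrite -?def_a ?nth_arcs.
Qed.

Lemma ear_vertex_inj i j : 0 < i < size q -> j < size q -> x j = x i -> j = i.
Proof.
case: ear => _ _ _ _ [uniq_ear | [last_x0 uniq_q]] /andP[lt0i lt_iq] lt_jq xji.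
  have [le_iq le_jq] := (ltnW lt_iq, ltnW lt_jq).
  by apply/eqP; rewrite -(nth_uniq x0 _ _ uniq_ear) // xji.
case: i lt0i lt_iq xji => // i _ lt_iq; have lt_i := ltnW lt_iq.
case: j lt_jq => [|j] lt_jq /eqP /=.
  by rewrite -{1}last_x0 -nth_last nth_uniq ?ltn_predL // => /eqP; lia.
by have lt_j := ltnW lt_jq; rewrite nth_uniq // => /eqP ->.
Qed.

Lemma ear_arc_from_internal i v :
  0 < i < size q -> (x i, v) \in seq_arcs (x0 :: q) -> v = x i.+1.
Proof.
move=> int_i /seq_arcsP[j lt_jq [xij ->]].
by rewrite (ear_vertex_inj int_i lt_jq (esym xij)).
Qed.

Lemma ear_arc_from_base u v :
  u \in WH -> (u, v) \in seq_arcs (x0 :: q) -> u = x0 /\ v = x 1.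
Proof.
case: ear => _ _ int_notin _ _ uWH /seq_arcsP[[|j] lt_jq [u_xj ->]].
  by rewrite u_xj.
by rewrite u_xj in uWH; case/negP: (int_notin j.+1 lt_jq).
Qed.

Variables (AH : {set (V * V)}) (N' : {set V}).
Hypothesis wfH : wf_digraph WH AH.
Hypothesis kerN' :
  is_kernel (WH :|: [set y in x0 :: q]) (AH :|: [set a in seq_arcs (x0 :: q)]) N'.

Lemma ear_kernel_alternates i : 0 < i < size q -> (x i \in N') = ~~ (x i.+1 \in N').
Proof.
case: ear => _ _ int_notin _ _ int_i; have /andP[_ lt_iq] := int_i.
apply: (is_kernel_succ1 kerN').
- by apply/setUP; right; rewrite in_set (@mem_nth _ x0 (x0 :: q) i (ltnW lt_iq)).
- by apply/setUP; right; rewrite in_set; apply/seq_arcsP; exists i.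
move=> w /setUP[arcH | ]; last by rewrite in_set => /(ear_arc_from_internal int_i).
by have [xiWH _ _] := wfH arcH; case/negP: (int_notin i int_i).
Qed.

Lemma ear_kernel_parity :
  0 < size q -> (x 1 \in N') = (last x0 q \in N') (+) odd (size q - 1).
Proof.
move=> r_gt0; have x_r : x (size q) = last x0 q := nth_last x0 (x0 :: q).
rewrite -x_r.
exact: (@alternating_odd (fun i => x i \in N') 1 _ r_gt0 ear_kernel_alternates).
Qed.

End Ear.

(* The ear is P = x0 :: q = (x_0, ..., x_r), with r = size q and x_r = last x0 q. *)
Theorem mainTheorem4 (V : finType) (WD : {set V}) (AD : {set (V * V)})
  (WH : {set V}) (AH : {set (V * V)}) (x0 : V) (q : seq V) (N' : {set V}) :
  wf_digraph WD AD -> strong WD AD -> nonseparable WD AD ->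
  subdigraph WH AH WD AD -> strong WH AH -> nonseparable WH AH ->
  is_ear AD WH x0 q ->
  2 <= size q ->
  is_kernel (WH :|: [set x in x0 :: q]) (AH :|: [set a in seq_arcs (x0 :: q)]) N' ->
  [\/ (x0 \in N' /\ last x0 q \in N'),
      (x0 \in N' /\ last x0 q \notin N'),
      [/\ x0 \notin N', last x0 q \in N' & ~~ odd (size q)] |
      [/\ x0 \notin N', last x0 q \notin N' & odd (size q)]] ->
  has_kernel WH AH.
Proof.
move=> _ _ _ [wfH _] _ _ ear r_ge2 kerN' cases.
exists (N' :&: WH); apply: (is_kernel_restrict wfH (subsetUl _ _) (subsetUl _ _) kerN').
move=> u v uWH uN vN /setUP[// | ]; rewrite in_set.
move=> /(ear_arc_from_base ear uWH)[u_x0 v_x1].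
have odd_r1 : odd (size q - 1) = ~~ odd (size q) by rewrite oddB ?(ltnW r_ge2) ?addbT.
move: uN vN; rewrite u_x0 v_x1 (ear_kernel_parity ear wfH kerN' (ltnW r_ge2)) odd_r1.
by case: cases => [[x0N _]|[x0N _]|[_ -> even_r]|[_ /negbTE-> odd_r]];
  rewrite ?x0N ?even_r ?odd_r.
Qed.
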